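(* Let $\mathcal{B}$ be an abelian category and $f:V_1\to V_2$, $g:V_2\to V_3$ morphisms in $\mathcal{B}$. Let $(C,p)$ be the cokernel of $f$ (with $p:V_2\to C$) and $(K,i)$ the kernel of $g$ (with $i:K\to V_2$), and assume $p\circ i=0$. Then $$\widehat{\mathrm{Im}(f)}+\widehat{\mathrm{Im}(g)}=\widehat{V_2}+\widehat{\mathrm{Im}(g\circ f)}$$ in $K_0(\mathcal{B})$. Moreover, if $\mathcal{B}$ is the category of finite-dimensional vector spaces over a finite field $\mathbb{k}$, then $|\mathrm{Im}(f)|\cdot|\mathrm{Im}(g)|=|V_2|\cdot|\mathrm{Im}(g\circ f)|$.
   Context: $\widehat{V}$ denotes the class of an object $V$ in the Grothendieck group $K_0(\mathcal{B})$; $|V|$ denotes the cardinality of a finite set. *)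

From HB Require Import structures.
From mathcomp Require Import all_boot all_order all_algebra.

Set Implicit Arguments.
Unset Strict Implicit.
Unset Printing Implicit Defensive.

Import GRing.Theory.
Local Open Scope ring_scope.

Record preadditive := PreAdditive {
  Ob : Type;
  Mor : Ob -> Ob -> zmodType;
  mcomp : forall X Y Z : Ob, Mor Y Z -> Mor X Y -> Mor X Z;
  idm : forall X : Ob, Mor X X;
  compA : forall (X Y Z W : Ob) (h : Mor Z W) (g : Mor Y Z) (f : Mor X Y),
      mcomp h (mcomp g f) = mcomp (mcomp h g) f;
  comp1m : forall (X Y : Ob) (f : Mor X Y), mcomp (idm Y) f = f;
  compm1 : forall (X Y : Ob) (f : Mor X Y), mcomp f (idm X) = f;
  compDl : forall (X Y Z : Ob) (g g' : Mor Y Z) (f : Mor X Y),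
      mcomp (g + g') f = mcomp g f + mcomp g' f;
  compDr : forall (X Y Z : Ob) (g : Mor Y Z) (f f' : Mor X Y),
      mcomp g (f + f') = mcomp g f + mcomp g f'
}.

Arguments mcomp {p X Y Z} _ _.
Arguments idm {p} X.

Section AbelianDefs.
Variable C : preadditive.

Definition is_zero_obj (Z : Ob C) : Prop :=
  (forall X (f : Mor Z X), f = 0) /\ (forall X (f : Mor X Z), f = 0).

Definition mono (X Y : Ob C) (f : Mor X Y) : Prop :=
  forall W (h h' : Mor W X), mcomp f h = mcomp f h' -> h = h'.

Definition epi (X Y : Ob C) (f : Mor X Y) : Prop :=
  forall W (h h' : Mor Y W), mcomp h f = mcomp h' f -> h = h'.

Definition is_kernel (X Y K : Ob C) (f : Mor X Y) (k : Mor K X) : Prop :=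
  mcomp f k = 0 /\
  forall W (h : Mor W X), mcomp f h = 0 -> exists! u : Mor W K, mcomp k u = h.

Definition is_cokernel (X Y Q : Ob C) (f : Mor X Y) (c : Mor Y Q) : Prop :=
  mcomp c f = 0 /\
  forall W (h : Mor Y W), mcomp h f = 0 -> exists! u : Mor Q W, mcomp u c = h.

Definition is_biproduct (X Y P : Ob C) (i1 : Mor X P) (i2 : Mor Y P)
    (p1 : Mor P X) (p2 : Mor P Y) : Prop :=
  [/\ mcomp p1 i1 = idm X, mcomp p2 i2 = idm Y, mcomp p1 i2 = 0, mcomp p2 i1 = 0
    & mcomp i1 p1 + mcomp i2 p2 = idm P].

Record abelian : Prop := {
  ab_zero : exists Z : Ob C, is_zero_obj Z;
  ab_biprod : forall X Y : Ob C, exists (P : Ob C) (i1 : Mor X P) (i2 : Mor Y P)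
      (p1 : Mor P X) (p2 : Mor P Y), is_biproduct i1 i2 p1 p2;
  ab_ker : forall (X Y : Ob C) (f : Mor X Y), exists (K : Ob C) (k : Mor K X),
      is_kernel f k;
  ab_coker : forall (X Y : Ob C) (f : Mor X Y), exists (Q : Ob C) (c : Mor Y Q),
      is_cokernel f c;
  ab_mono_normal : forall (X Y : Ob C) (m : Mor X Y), mono m ->
      exists (Z : Ob C) (g : Mor Y Z), is_kernel g m;
  ab_epi_normal : forall (X Y : Ob C) (e : Mor X Y), epi e ->
      exists (Z : Ob C) (g : Mor Z X), is_cokernel g e
}.

Definition is_image (X Y : Ob C) (f : Mor X Y) (I : Ob C) : Prop :=
  exists (Q : Ob C) (c : Mor Y Q) (m : Mor I Y), is_cokernel f c /\ is_kernel c m.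

Definition short_exact (X Y Z : Ob C) (a : Mor X Y) (b : Mor Y Z) : Prop :=
  is_kernel b a /\ is_cokernel a b.

(* Additive invariants: maps from objects to an abelian group that are
   additive on short exact sequences.  These are exactly the group
   homomorphisms out of K_0(C) (universal property of K_0). *)
Definition additive_invariant (A : zmodType) (chi : Ob C -> A) : Prop :=
  forall (X Y Z : Ob C) (a : Mor X Y) (b : Mor Y Z),
    short_exact a b -> chi Y = chi X + chi Z.

(* K_0(C) = F / R with F free abelian on objects and R the relations
   [Y] - [X] - [Z] for short exact sequences; two elements of F are equal
   in F / R iff every homomorphism F -> A killing R takes the same value
   on them (take A = F / R). *)
Definition K0_eq (xs ys : seq (Ob C)) : Prop :=
  forall (A : zmodType) (chi : Ob C -> A), additive_invariant chi ->
    \sum_(x <- xs) chi x = \sum_(y <- ys) chi y.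

End AbelianDefs.

(* The sequence
   [0 -> K -> V2 -> Im g -> 0] is exact, so [V2] = [K] + [Im g].  The
   hypothesis [p o i = 0] says that [K] lies in [Im f]; then [K] is also the
   kernel of [g] restricted to [Im f], whose image is [Im (g o f)] because
   [V1 -> Im f] is epi, so [Im f] = [K] + [Im (g o f)].  Adding the two
   relations gives the identity in K_0.  Over a finite field [k], a space of
   dimension [d] has [|k|^d] elements, and the identity of dimensions is
   [rank (A *m B) + dim (Im A :&: ker B) = rank A] with [ker B <= Im A]. *)
From Pilot Require Import Defs.
From HB Require Import structures.
From mathcomp Require Import all_boot all_order all_algebra.
Import GRing.Theory.
Local Open Scope ring_scope.
Set Implicit Arguments.
Unset Strict Implicit.

Section Preadditive.
Variable C : preadditive.
Implicit Types X Y Z W : Ob C.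

Lemma comp0m X Y Z (f : Mor X Y) : mcomp (0 : Mor Y Z) f = 0.
Proof. by apply: (addrI (mcomp (0 : Mor Y Z) f)); rewrite -compDl !addr0. Qed.

Lemma compm0 X Y Z (g : Mor Y Z) : mcomp g (0 : Mor X Y) = 0.
Proof. by apply: (addrI (mcomp g (0 : Mor X Y))); rewrite -compDr !addr0. Qed.

Lemma compBm X Y Z (g g' : Mor Y Z) (f : Mor X Y) :
  mcomp (g - g') f = mcomp g f - mcomp g' f.
Proof. by apply: (addIr (mcomp g' f)); rewrite -compDl !subrK. Qed.

Lemma epi_from_cancel0 X Y (e : Mor X Y) :
  (forall W (x : Mor Y W), mcomp x e = 0 -> x = 0) -> epi e.
Proof.
move=> cancel0 W h h' E; apply/eqP; rewrite -subr_eq0; apply/eqP/cancel0.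
by rewrite compBm E subrr.
Qed.

Lemma kernel_mono X Y K (f : Mor X Y) (k : Mor K X) : is_kernel f k -> mono k.
Proof.
move=> [fk0 univ] W h h' E.
have fkh0 : mcomp f (mcomp k h) = 0 by rewrite Defs.compA fk0 comp0m.
have [u [_ u_uniq]] := univ W _ fkh0.
by rewrite -(u_uniq h erefl) (u_uniq h' (esym E)).
Qed.

Lemma mono_comp X Y Z (a : Mor Y Z) (b : Mor X Y) :
  mono a -> mono b -> mono (mcomp a b).
Proof. by move=> ma mb W h h' E; apply/mb/ma; rewrite !Defs.compA. Qed.

Lemma eq_kernel X Y Y' K (g : Mor X Y) (g' : Mor X Y') (k : Mor K X) :
  (forall W (h : Mor W X), mcomp g h = 0 <-> mcomp g' h = 0) ->
  is_kernel g k -> is_kernel g' k.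
Proof.
move=> eq_ann [gk0 univ]; split=> [|W h /eq_ann]; last exact: univ.
exact/eq_ann.
Qed.

Lemma eq_cokernel X X' Y Q (g : Mor X Y) (g' : Mor X' Y) (c : Mor Y Q) :
  (forall W (h : Mor Y W), mcomp h g = 0 <-> mcomp h g' = 0) ->
  is_cokernel g c -> is_cokernel g' c.
Proof.
move=> eq_ann [cg0 univ]; split=> [|W h /eq_ann]; last exact: univ.
exact/eq_ann.
Qed.

Lemma cokernel_comp_epi X Y Z Q (e : Mor X Y) (h : Mor Y Z) (c : Mor Z Q) :
  epi e -> is_cokernel (mcomp h e) c -> is_cokernel h c.
Proof.
move=> epi_e; apply: eq_cokernel => W t; rewrite Defs.compA; split=> [te0|->].
  by apply: epi_e; rewrite comp0m.
by rewrite comp0m.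
Qed.

Lemma kernel_comp_mono X Y Z K (g : Mor Y Z) (m : Mor X Y) (i : Mor K Y)
    (j : Mor K X) :
  mono m -> mcomp m j = i -> is_kernel g i -> is_kernel (mcomp g m) j.
Proof.
move=> mono_m mj_i [gi0 univ]; split; first by rewrite -Defs.compA mj_i.
move=> W h gmh0; rewrite -Defs.compA in gmh0.
have [v [iv_mh v_uniq]] := univ W _ gmh0.
exists v; split; first by apply: mono_m; rewrite Defs.compA mj_i iv_mh.
by move=> v' jv'_h; apply: v_uniq; rewrite -mj_i -Defs.compA jv'_h.
Qed.

End Preadditive.

Section Abelian.
Variables (C : preadditive) (abC : abelian C).
Implicit Types X Y Z W I : Ob C.

Lemma image_least X Y Q I J (g : Mor X Y) (c : Mor Y Q) (m : Mor I Y)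
    (n : Mor J Y) (h : Mor X J) :
  is_cokernel g c -> is_kernel c m -> mono n -> mcomp n h = g ->
  exists v : Mor I J, mcomp n v = m.
Proof.
move=> [cg0 c_univ] [cm0 _] mono_n nh_g.
have [Z [z [zn0 z_univ]]] := ab_mono_normal abC mono_n.
have zg0 : mcomp z g = 0 by rewrite -nh_g Defs.compA zn0 comp0m.
have [u [uc_z _]] := c_univ _ z zg0.
have zm0 : mcomp z m = 0 by rewrite -uc_z -Defs.compA cm0 compm0.
by have [v [nv_m _]] := z_univ _ m zm0; exists v.
Qed.

Lemma image_factor_epi X Y Q I (g : Mor X Y) (c : Mor Y Q) (m : Mor I Y)
    (e : Mor X I) :
  is_cokernel g c -> is_kernel c m -> mcomp m e = g -> epi e.
Proof.
move=> coker_c ker_m me_g; have mono_m := kernel_mono ker_m.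
have [Qe [q [qe0 q_univ]]] := ab_coker abC e.
have [Kq [k ker_k]] := ab_ker abC q.
have [e' [ke'_e _]] := proj2 ker_k _ e qe0.
have mono_mk := mono_comp mono_m (kernel_mono ker_k).
have mke'_g : mcomp (mcomp m k) e' = g by rewrite -Defs.compA ke'_e.
(* [I] is the least subobject through which [g] factors, so [ker q] is all of
   [I] and the cokernel [q] of [e] vanishes. *)
have [v mkv_m] := image_least coker_c ker_m mono_mk mke'_g.
have kv1 : mcomp k v = idm I.
  by apply: mono_m; rewrite Defs.compA mkv_m compm1.
have q0 : q = 0 by rewrite -(compm1 q) -kv1 Defs.compA (proj1 ker_k) comp0m.
apply: epi_from_cancel0 => W x xe0.
by have [w [wq_x _]] := q_univ _ x xe0; rewrite -wq_x q0 compm0.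
Qed.

Lemma epi_kernel_cokernel X Y K (e : Mor X Y) (i : Mor K X) :
  epi e -> is_kernel e i -> is_cokernel i e.
Proof.
move=> epi_e [ei0 i_univ]; split=> // W t ti0.
have [Z [h [eh0 h_univ]]] := ab_epi_normal abC epi_e.
have [u [iu_h _]] := i_univ _ h eh0.
by apply: h_univ; rewrite -iu_h Defs.compA ti0 comp0m.
Qed.

Lemma image_short_exact X Y K Q I (g : Mor X Y) (i : Mor K X) (c : Mor Y Q)
    (m : Mor I Y) :
  is_kernel g i -> is_cokernel g c -> is_kernel c m ->
  exists e : Mor X I, short_exact i e.
Proof.
move=> ker_i coker_c ker_m; have mono_m := kernel_mono ker_m.
have [e [me_g _]] := proj2 ker_m _ g (proj1 coker_c).
have epi_e := image_factor_epi coker_c ker_m me_g.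
have ker_e : is_kernel e i.
  apply: eq_kernel ker_i => W h; rewrite -me_g -Defs.compA.
  split=> [meh0|->]; last by rewrite compm0.
  by apply: mono_m; rewrite compm0.
by exists e; split=> //; apply: epi_kernel_cokernel.
Qed.

Lemma K0_image_sum V1 V2 V3 (f : Mor V1 V2) (g : Mor V2 V3) Q (p : Mor V2 Q)
    K (i : Mor K V2) (If Ig Igf : Ob C) :
  is_cokernel f p -> is_kernel g i -> mcomp p i = 0 ->
  is_image f If -> is_image g Ig -> is_image (mcomp g f) Igf ->
  K0_eq [:: If; Ig] [:: V2; Igf].
Proof.
move=> coker_p ker_i pi0 [Qf [cf [mf [coker_cf ker_mf]]]]
  [Qg [cg [mg [coker_cg ker_mg]]]] [Qgf [cgf [mgf [coker_cgf ker_mgf]]]]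
  A chi chi_additive.
rewrite !big_cons !big_nil !addr0.
have [eg ses_g] := image_short_exact ker_i coker_cg ker_mg.
have [ef [mef_f _]] := proj2 ker_mf _ f (proj1 coker_cf).
have epi_ef := image_factor_epi coker_cf ker_mf mef_f.
have [u [up_cf _]] := proj2 coker_p _ cf (proj1 coker_cf).
have cfi0 : mcomp cf i = 0 by rewrite -up_cf -Defs.compA pi0 compm0.
have [j [mfj_i _]] := proj2 ker_mf _ i cfi0.
have ker_j := kernel_comp_mono (kernel_mono ker_mf) mfj_i ker_i.
have coker_cgf' : is_cokernel (mcomp g mf) cgf.
  by apply: (cokernel_comp_epi epi_ef); rewrite -Defs.compA mef_f.
have [egf ses_gf] := image_short_exact ker_j coker_cgf' ker_mgf.
by rewrite (chi_additive _ _ _ _ _ ses_g) (chi_additive _ _ _ _ _ ses_gf) addrAC.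
Qed.

End Abelian.

Lemma card_submx (F : finFieldType) m n (A : 'M[F]_(m, n)) :
  #|[set v : 'rV[F]_n | (v <= A)%MS]| = (#|F| ^ \rank A)%N.
Proof.
have -> : [set v : 'rV[F]_n | (v <= A)%MS] =
    [set u *m row_base A | u in [set: 'rV[F]_(\rank A)]].
  apply/setP => v; rewrite inE -(eq_row_base A); apply/idP/imsetP.
    by case/submxP=> u ->; exists u; rewrite ?inE.
  by case=> u _ ->; rewrite submxMl.
rewrite card_imset ?cardsT ?card_mx ?mul1n // => u1 u2 /eqP.
by rewrite -subr_eq0 -mulmxBl mulmx_free_eq0 ?row_base_free // subr_eq0 => /eqP.
Qed.

Lemma mxrank_add_mul_ker_sub (F : fieldType) n1 n2 n3
    (A : 'M[F]_(n1, n2)) (B : 'M[F]_(n2, n3)) :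
  (kermx B <= A)%MS -> (\rank A + \rank B = n2 + \rank (A *m B))%N.
Proof.
move=> kerB_A; have := mxrank_mul_ker A B.
rewrite (capmx_idPr kerB_A) mxrank_ker => <-.
by rewrite -addnA subnK ?rank_leq_row // addnC.
Qed.

Theorem propositionA2 :
  (forall (C : preadditive), abelian C ->
   forall (V1 V2 V3 : Ob C) (f : Mor V1 V2) (g : Mor V2 V3)
     (Q : Ob C) (p : Mor V2 Q) (K : Ob C) (i : Mor K V2),
   is_cokernel f p -> is_kernel g i -> mcomp p i = 0 ->
   forall (If Ig Igf : Ob C),
   is_image f If -> is_image g Ig -> is_image (mcomp g f) Igf ->
   K0_eq [:: If; Ig] [:: V2; Igf])
  /\
  (forall (F : finFieldType) (n1 n2 n3 : nat)
     (A : 'M[F]_(n1, n2)) (B : 'M[F]_(n2, n3)),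
   (* f : v |-> v *m A,  g : w |-> w *m B  on row vectors;
      i = kernel inclusion (rows of kermx B), p = cokernel map (cokermx A) *)
   kermx B *m cokermx A = 0 ->
   (#|[set v : 'rV[F]_n2 | (v <= A)%MS]| *
    #|[set w : 'rV[F]_n3 | (w <= B)%MS]|)%N =
   (#|[set: 'rV[F]_n2]| * #|[set u : 'rV[F]_n3 | (u <= A *m B)%MS]|)%N).
Proof.
split=> [C abC V1 V2 V3 f g Q p K i coker_p ker_i pi0 If Ig Igf|F n1 n2 n3 A B].
  exact: K0_image_sum coker_p ker_i pi0.
move=> /eqP; rewrite -submxE => kerB_A.
rewrite !card_submx cardsT card_mx mul1n -!expnD.
by rewrite mxrank_add_mul_ker_sub.
Qed.
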